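(* Let $k\ge3$ and $A,B\in\mathbb F_2^{k\times k}$. Suppose (1) the $k\times 2k$ matrix $[A\,|\,B]$ has rank $k$, and (2) $AEB^T+BE^{-T}A^T=0$ for every $E\in GL(k,\mathbb F_2)$. Then $A=0$ or $B=0$.
   Context: Arithmetic over $\mathbb F_2$; $E^{-T}=(E^{-1})^T$. *)

From mathcomp Require Import all_boot all_order all_algebra.
Set Implicit Arguments.
Unset Strict Implicit.
Unset Printing Implicit Defensive.

From mathcomp Require Import all_boot all_order all_algebra.
From mathcomp Require Import perm ring.
Import GRing.Theory.
Set Implicit Arguments.
Unset Strict Implicit.
Unset Printing Implicit Defensive.
Local Open Scope ring_scope.

(* Put phi X := A X B^T.  Over F_2 the hypothesis says
   phi E = (phi E^-1)^T, so phi of every involution is symmetric.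
   The involutions 1 and 1 + e_ij (i <> j) make phi e_ij symmetric; the
   mutually inverse matrices (1 + e_ij) P and P (1 + e_ij), P the swap of
   i and j, give phi e_ii = (phi e_jj)^T, and a third index l closes the
   triangle i, j, l to make phi e_ii symmetric too.  Entrywise this says
   A_ri B_sj = A_si B_rj for all r, s, i, j, which forces all columns of A
   and B onto one line: [A | B] would have rank at most 1 < k. *)

Lemma oppmx_F2 m n (M : 'M['F_2]_(m, n)) : - M = M.
Proof. by apply/matrixP=> a b; rewrite mxE oppr_pchar2 // pchar_Fp. Qed.

Lemma addmx_F2 m n (M : 'M['F_2]_(m, n)) : M + M = 0.
Proof. by rewrite -[X in X + _]oppmx_F2 addNr. Qed.

Lemma invmx_mulmx1 (R : comUnitRingType) n (E F : 'M[R]_n) :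
  E *m F = 1%:M -> invmx E = F.
Proof.
by move=> EF; have [uE _] := mulmx1_unit EF; rewrite -[LHS]mulmx1 -EF mulKmx.
Qed.

Lemma tperm_mx_invol (R : pzRingType) n (i j : 'I_n) :
  tperm_mx i j *m tperm_mx i j = 1%:M :> 'M[R]_n.
Proof. by rewrite -perm_mxM tperm2 perm_mx1. Qed.

Lemma mul_delta_tperm_mx (R : pzRingType) n (i j : 'I_n) :
  delta_mx i j *m tperm_mx i j = delta_mx i i :> 'M[R]_n.
Proof.
apply/matrixP=> a b; rewrite -xcolE !mxE.
by rewrite (canF_eq (tpermK i j)) tpermR.
Qed.

Lemma mul_tperm_delta_mx (R : pzRingType) n (i j : 'I_n) :
  tperm_mx i j *m delta_mx i j = delta_mx j j :> 'M[R]_n.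
Proof.
apply/matrixP=> a b; rewrite -xrowE !mxE.
by rewrite (canF_eq (tpermK i j)) tpermL.
Qed.

Lemma rank_row_mx_le1 (F : fieldType) m n (A B : 'M[F]_(m, n)) :
    (forall r s i j, A r i * B s j = A s i * B r j) ->
  A != 0 -> B != 0 -> (\rank (row_mx A B) <= 1)%N.
Proof.
move=> AB /matrix0Pn[r0 [p nzA]] /matrix0Pn[s0 [q nzB]].
have eA : A = col q B *m ((B s0 q)^-1 *: row s0 A).
  apply/matrixP=> a b; rewrite !mxE big_ord1 !mxE.
  by rewrite mulrCA [B a q * _]mulrC -AB [_ * B s0 q]mulrC mulKf.
have eB : B = col q B *m ((A s0 p / B s0 q / A r0 p) *: row r0 B).
  apply/matrixP=> a b; rewrite !mxE big_ord1 !mxE.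
  have -> : B a b = A a p * B r0 b / A r0 p by rewrite -AB [A r0 p * _]mulrC mulfK.
  have -> : A a p = A s0 p * B a q / B s0 q by rewrite -AB mulfK.
  ring.
rewrite eA [X in row_mx _ X]eB -mul_mx_row.
exact: leq_trans (mxrankM_maxl _ _) (rank_leq_col _).
Qed.

Lemma exists_two_others n (i : 'I_n) : (3 <= n)%N ->
  exists j l : 'I_n, [/\ i != j, i != l & j != l].
Proof.
move=> n3; have n1 := leq_trans (isT : (1 < 3)%N) n3.
have n0 := ltnW n1.
case: i => [[|[|m]] im].
- by exists (Ordinal n1), (Ordinal n3).
- by exists (Ordinal n0), (Ordinal n3).
- by exists (Ordinal n0), (Ordinal n1).
Qed.

Lemma transvection_F2_invol n (i j : 'I_n) : i != j ->
  (1%:M + delta_mx i j) *m (1%:M + delta_mx i j) = 1%:M :> 'M['F_2]_n.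
Proof.
move=> ij; rewrite mulmxDl !mulmxDr !mul1mx mulmx1 mul_delta_mx_0 1?eq_sym //.
by rewrite addr0 -addrA addmx_F2 addr0.
Qed.

Section InverseTransposeIdentity.

Variables (k : nat) (A B : 'M['F_2]_k).

Definition phi (X : 'M['F_2]_k) := A *m X *m B^T.

Lemma phiD X Y : phi (X + Y) = phi X + phi Y.
Proof. by rewrite /phi mulmxDr mulmxDl. Qed.

Lemma phi_delta_mx i j r s : phi (delta_mx i j) r s = A r i * B s j.
Proof.
rewrite /phi -(mul_delta_mx (0 : 'I_1)) mulmxA -colE -mulmxA -rowE.
by rewrite !mxE big_ord1 !mxE.
Qed.

Hypothesis hE : forall E : 'M['F_2]_k, E \in unitmx ->
  A *m E *m B^T + B *m (invmx E)^T *m A^T = 0.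

Lemma phi_inv E F : E *m F = 1%:M -> phi E = (phi F)^T.
Proof.
move=> EF; have [uE _] := mulmx1_unit EF.
rewrite /phi; move/eqP: (hE uE).
by rewrite addr_eq0 oppmx_F2 (invmx_mulmx1 EF) !trmx_mul trmxK mulmxA => /eqP.
Qed.

Lemma phi_invol_sym E : E *m E = 1%:M -> (phi E)^T = phi E.
Proof. by move/phi_inv => {2}->. Qed.

Lemma phi_delta_offdiag_sym i j :
  i != j -> (phi (delta_mx i j))^T = phi (delta_mx i j).
Proof.
move=> ij; have := phi_invol_sym (transvection_F2_invol ij).
by rewrite phiD linearD /= phi_invol_sym ?mulmx1 // => /addrI.
Qed.

Lemma phi_delta_diag i j :
  i != j -> phi (delta_mx i i) = (phi (delta_mx j j))^T.
Proof.
move=> ij; pose T : 'M['F_2]_k := 1%:M + delta_mx i j.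
pose P : 'M['F_2]_k := tperm_mx i j.
have : (T *m P) *m (P *m T) = 1%:M.
  by rewrite mulmxA -(mulmxA T) tperm_mx_invol mulmx1 transvection_F2_invol.
move/phi_inv; rewrite /T !mulmxDl !mulmxDr mul1mx mulmx1.
rewrite mul_delta_tperm_mx mul_tperm_delta_mx !phiD linearD /=.
by rewrite phi_invol_sym ?tperm_mx_invol // => /addrI.
Qed.

Lemma phi_delta_sym : (3 <= k)%N -> forall i j,
  (phi (delta_mx i j))^T = phi (delta_mx i j).
Proof.
move=> k3 i j; have [<-{j}|] := eqVneq i j; last exact: phi_delta_offdiag_sym.
have [j [l [ij il jl]]] := exists_two_others i k3.
by rewrite {1}(phi_delta_diag ij) trmxK (phi_delta_diag jl) (phi_delta_diag il).
Qed.

Lemma entry_products_sym :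
  (3 <= k)%N -> forall r s i j, A r i * B s j = A s i * B r j.
Proof.
by move=> k3 r s i j; rewrite -!phi_delta_mx -{1}(phi_delta_sym k3) mxE.
Qed.

End InverseTransposeIdentity.

Theorem mainTheorem9 (k : nat) (hk : (3 <= k)%N) (A B : 'M['F_2]_k)
  (hrank : \rank (row_mx A B) = k)
  (hE : forall E : 'M['F_2]_k, E \in unitmx ->
          A *m E *m B^T + B *m (invmx E)^T *m A^T = 0) :
  A = 0 \/ B = 0.
Proof.
have [->|nzA] := eqVneq A 0; first by left.
have [->|nzB] := eqVneq B 0; first by right.
have := rank_row_mx_le1 (entry_products_sym hE hk) nzA nzB.
by rewrite hrank leqNgt (leq_trans _ hk).
Qed.
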